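(* Let $n\ge 1$. The Zeckendorf game on $n$, starting from $\{F_1^n\}$, can be played to its end (the Zeckendorf decomposition of $n$) using only splitting moves and $C_1$ moves if and only if $n=F_k-1$ for some integer $k\ge 2$.
   Context: Fibonacci numbers are indexed by $F_1=1$, $F_2=2$, $F_{i+1}=F_i+F_{i-1}$. A game state is a finite multiset of Fibonacci numbers (tracked by index); $\{F_1^n\}$ denotes $n$ copies of $F_1$. The legal moves are: $C_1$: replace $F_1,F_1$ by $F_2$; for $i\ge 2$, $C_i$: replace $F_{i-1},F_i$ by $F_{i+1}$ (a ''combining move''); $S_2$: replace $F_2,F_2$ by $F_1,F_3$; for $i\ge 3$, $S_i$: replace $F_i,F_i$ by $F_{i-2},F_{i+1}$ (a ''splitting move''). The game on $n$ starts at $\{F_1^n\}$ and ends when no legal move is available, which happens exactly at the Zeckendorf decomposition of $n$ (the unique representation of $n$ as a sum of $F_i$'s with distinct, pairwise non-consecutive indices). *)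

From mathcomp Require Import all_boot.
Set Implicit Arguments.
Unset Strict Implicit.
Unset Printing Implicit Defensive.

(* Fibonacci numbers with F_1 = 1, F_2 = 2, F_{i+1} = F_i + F_{i-1}. *)
Fixpoint fibp (m : nat) : nat :=
  match m with
  | 0 => 1
  | 1 => 2
  | (m'.+1 as p).+1 => fibp p + fibp m'
  end.
(* F k for k >= 1 (F 0 is unused; it equals F 1 by this encoding). *)
Definition F (k : nat) : nat := fibp k.-1.

(* A game state: multiset of Fibonacci numbers tracked by index;
   [s i] is the multiplicity of F_i (index 0 is unused). *)
Definition state := nat -> nat.

Inductive move : Type :=
| Comb of nat
| Split of nat.

Definition move_valid (m : move) : bool :=
  match m with
  | Comb i => 1 <= i
  | Split i => 2 <= i
  end.

Definition move_rem (m : move) : seq nat :=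
  match m with
  | Comb 1 => [:: 1; 1]
  | Comb i => [:: i.-1; i]
  | Split i => [:: i; i]
  end.

Definition move_add (m : move) : seq nat :=
  match m with
  | Comb i => [:: i.+1]
  | Split 2 => [:: 1; 3]
  | Split i => [:: i.-2; i.+1]
  end.

Definition legal (m : move) (s : state) : Prop :=
  move_valid m /\ forall j, count_mem j (move_rem m) <= s j.

Definition plays (m : move) (s t : state) : Prop :=
  legal m s /\
  forall j, t j = s j - count_mem j (move_rem m) + count_mem j (move_add m).

Definition split_or_C1 (m : move) : Prop :=
  match m with
  | Split _ => True
  | Comb i => i = 1
  end.

Inductive reach (P : move -> Prop) : state -> state -> Prop :=
| reach_refl s : reach P s s
| reach_step s t u m : P m -> plays m s t -> reach P t u -> reach P s u.

Definition terminal (s : state) : Prop := forall m, ~ legal m s.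

Definition start (n : nat) : state := fun j => if j == 1 then n else 0.

From Pilot Require Import Defs.
From mathcomp Require Import all_boot zify.
From Stdlib Require Import FunctionalExtensionality.
Set Implicit Arguments.
Unset Strict Implicit.
Unset Printing Implicit Defensive.

(* Every restricted move is a "firing" at some index i >= 1: two copies of
   F_i are replaced by F_{i+1} together with a remainder (nothing for i = 1,
   F_1 for i = 2, F_{i-2} for i >= 3).  Write value s j for the total of the
   parts of s of index at most j.

   Only if.  Firings preserve the total value and the property [filled]:
   whenever some part sits above index j, the parts up to j are worth at
   least F_j - 1.  At the end of the game the state is a Zeckendorf
   decomposition, whose parts up to j are worth at most F_{j+1} - 1; with
   [filled] this forces the whole value to be F_{p+1} - 1, p the top index.

   If.  Let alt m be the state F_m + F_{m-2} + F_{m-4} + ..., a Zeckendorf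
   decomposition of value F_{m+1} - 1.  Firing lets one absorb an extra F_j
   into alt j and merge alt (p+1) + alt p + F_1 into alt (p+2); by induction
   on the Fibonacci recurrence, {F_1^n} with n = F_{p+2} - 1 reaches alt (p+1). *)

(* With the encoding F 0 = 1, the recurrence holds from index 0 on. *)
Lemma F_rec i : F i.+2 = F i.+1 + F i.
Proof. by case: i. Qed.

Lemma F_gt0 i : 0 < F i.
Proof. by elim: i => // -[|i] // IH; rewrite F_rec addn_gt0 IH. Qed.

Lemma F_monotone i : F i <= F i.+1.
Proof. by case: i => // i; rewrite F_rec leq_addr. Qed.

Definition single (p : nat) : state := fun x => (p == x : nat).
Arguments single : simpl never.

Lemma single_eq p : single p p = 1.
Proof. by rewrite /single eqxx. Qed.

Lemma single_neq p x : p != x -> single p x = 0.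
Proof. by rewrite /single => /negbTE ->. Qed.

Definition sum_state (s u : state) : state := fun x => s x + u x.

Lemma sum_stateC s u : sum_state s u = sum_state u s.
Proof. by apply: functional_extensionality => x; rewrite /sum_state addnC. Qed.

Fixpoint value (s : state) (j : nat) : nat :=
  if j is j'.+1 then value s j' + s j * F j else 0.

Lemma value_succ s j : value s j.+1 = value s j + s j.+1 * F j.+1.
Proof. by []. Qed.

Lemma value_add s u j : value (sum_state s u) j = value s j + value u j.
Proof. by elim: j => //= j ->; rewrite /sum_state mulnDl addnACA. Qed.

Lemma value_scale c s j : value (fun x => c * s x) j = c * value s j.
Proof. by elim: j => [|j /= ->]; rewrite ?muln0 // mulnDr mulnA. Qed.

Lemma value_balance a b c d j : (forall x, a x + b x = c x + d x) ->
  value a j + value b j = value c j + value d j.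
Proof.
move=> E; rewrite -!value_add.
by have -> : sum_state a b = sum_state c d by apply: functional_extensionality.
Qed.

Lemma value_single_out p j : j < p -> value (single p) j = 0.
Proof.
elim: j => //= j IH lt_jp.
by rewrite IH ?(ltnW lt_jp) // single_neq ?(gtn_eqF lt_jp).
Qed.

Lemma value_single p j : 1 <= p <= j -> value (single p) j = F p.
Proof.
elim: j => [|j IH] /=; first lia.
case: (ltngtP p j.+1) => [lt_p|lt_p|->] Hp.
- by rewrite IH ?single_neq ?(ltn_eqF lt_p); lia.
- lia.
- by rewrite value_single_out // single_eq mul1n.
Qed.

Definition supported (s : state) (B : nat) : Prop := forall x, B < x -> s x = 0.

Lemma value_top s B : 0 < value s B ->
  exists p, [/\ 1 <= p <= B, 0 < s p & value s B = value s p].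
Proof.
elim: B => [|B IH] //=; case: (posnP (s B.+1)) => [-> | pos_top] pos.
- rewrite mul0n addn0 in pos *; have [p [Hp pos_p ->]] := IH pos.
  by exists p; split => //; lia.
- by exists B.+1; rewrite leqnn.
Qed.

Definition remainder (i : nat) : state :=
  match i with 0 | 1 => fun _ => 0 | 2 => single 1 | i'.+3 => single i'.+1 end.

Definition fire (i : nat) (s : state) : state :=
  fun x => s x - 2 * single i x + single i.+1 x + remainder i x.

Definition firing_move (i : nat) : move := if i is 1 then Comb 1 else Defs.Split i.

Lemma remainder_above i x : i <= x -> remainder i x = 0.
Proof. by case: i => [|[|[|i]]] //= Hx; rewrite single_neq //; lia. Qed.

Lemma remainder_value i j : 1 <= i <= j.+1 -> value (remainder i) j + F i.+1 = 2 * F i.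
Proof.
case: i => [|[|[|i]]] //= Hi.
- by have -> : value (fun _ => 0) j = 0 by elim: j {Hi} => //= j ->.
- by rewrite value_single //; lia.
- by have := F_rec i.+2; have := F_rec i.+1; rewrite value_single; lia.
Qed.

Lemma firing_moveP m : split_or_C1 m -> move_valid m -> exists2 i, 1 <= i & m = firing_move i.
Proof.
case: m => [i /= -> _ | [|[|i]] _ //]; first by exists 1.
by exists i.+2.
Qed.

Lemma firing_move_restricted i : split_or_C1 (firing_move i).
Proof. by case: i => [|[|i]]. Qed.

Lemma count_rem_firing i x : 1 <= i ->
  count_mem x (move_rem (firing_move i)) = 2 * single i x.
Proof. by case: i => [|[|i]] //= _; rewrite /single; lia. Qed.

Lemma count_add_firing i x : 1 <= i ->
  count_mem x (move_add (firing_move i)) = single i.+1 x + remainder i x.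
Proof. by case: i => [|[|[|i]]] //= _; rewrite /single; lia. Qed.

Lemma legal_firing i s : 1 <= i -> legal (firing_move i) s <-> 2 <= s i.
Proof.
move=> i_gt0; split=> [[_ /(_ i)] | s_i].
  by rewrite count_rem_firing // single_eq.
split; first by case: i i_gt0 {s_i} => [|[|i]].
move=> j; rewrite count_rem_firing //.
by case: (i =P j) => [<- | /eqP ne]; rewrite ?single_eq ?single_neq.
Qed.

Lemma plays_firing i s t : 1 <= i ->
  plays (firing_move i) s t <-> 2 <= s i /\ t = fire i s.
Proof.
move=> i_gt0; rewrite /plays legal_firing //.
split=> [[s_i E] | [s_i ->]]; split => //.
- by apply: functional_extensionality => j; rewrite E count_rem_firing ?count_add_firing // addnA.
- by move=> j; rewrite count_rem_firing ?count_add_firing // addnA.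
Qed.

Lemma restricted_step m s t : split_or_C1 m -> plays m s t ->
  exists i, [/\ 1 <= i, 2 <= s i & t = fire i s].
Proof.
move=> restr play; have [i i_gt0 def_m] := firing_moveP restr (proj1 (proj1 play)).
by move: play; rewrite def_m plays_firing // => -[s_i ->]; exists i.
Qed.

Lemma fire_balance i s x : 2 <= s i ->
  fire i s x + 2 * single i x = s x + (single i.+1 x + remainder i x).
Proof.
rewrite /fire => s_i; case: (i =P x) => [<- | /eqP ne]; last by rewrite single_neq //; lia.
by rewrite single_eq; lia.
Qed.

Lemma fire_value i s j : 2 <= s i -> value (fire i s) j + 2 * value (single i) j =
  value s j + (value (single i.+1) j + value (remainder i) j).
Proof.
move=> s_i; rewrite -value_scale -(value_add (single i.+1)).
by apply: value_balance => x; apply: fire_balance.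
Qed.

Lemma fire_value_low i s j : 2 <= s i -> j < i -> value s j <= value (fire i s) j.
Proof.
by move=> s_i lt_ji; have := fire_value j s_i; rewrite !value_single_out //; lia.
Qed.

Lemma fire_value_high i s j : 1 <= i -> 2 <= s i -> i < j -> value (fire i s) j = value s j.
Proof.
move=> i_gt0 s_i lt_ij; have := fire_value j s_i; have := @remainder_value i j.
by rewrite !value_single; lia.
Qed.

Lemma fire_above i s x : i.+1 < x -> fire i s x = s x.
Proof. by move=> lt_ix; rewrite /fire !single_neq ?remainder_above; lia. Qed.

Definition filled (s : state) : Prop :=
  forall j k, 1 <= j < k -> 0 < s k -> F j - 1 <= value s j.

(* The critical index of [fire_filled]: at j = i, the bound for s at i - 1
   plus the two removed copies of F_i pay for the new bound F_i - 1. *)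
Lemma fire_filled_at i s : 1 <= i -> 2 <= s i -> filled s -> F i - 1 <= value (fire i s) i.
Proof.
case: i => [|[|q]] // _ s_i fill_s.
have := fire_value q.+2 s_i; rewrite (@value_single_out q.+3) // (@value_single q.+2) ?leqnn //.
rewrite (value_succ s q.+1).
have := fill_s q.+1 q.+2 (ltnSn _) (ltnW s_i); have := @remainder_value q.+2 q.+2.
have : 2 * F q.+2 <= s q.+2 * F q.+2 by rewrite leq_mul2r s_i orbT.
by have := F_rec q.+1; have := F_gt0 q.+1; lia.
Qed.

Lemma fire_filled i s : 1 <= i -> 2 <= s i -> filled s -> filled (fire i s).
Proof.
move=> i_gt0 s_i fill_s j k /andP[j_gt0 lt_jk] pos_k.
case: (ltngtP j i) => [lt_ji | lt_ij | ->]; last exact: fire_filled_at.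
- apply: leq_trans (fire_value_low s_i lt_ji).
  by apply: fill_s (ltnW s_i); rewrite j_gt0.
- rewrite fire_value_high //; apply: (fill_s j k); first by rewrite j_gt0.
  by rewrite -(@fire_above i s k) //; lia.
Qed.

Definition admissible (n : nat) (s : state) : Prop :=
  (exists B, supported s B /\ value s B = n) /\ filled s.

Lemma admissible_start n : admissible n (start n).
Proof.
split; first by exists 1; split=> [[|[|x]] | ] //=; rewrite muln1.
by move=> j k /andP[j_gt0 lt_jk]; rewrite /start; case: eqP => //; lia.
Qed.

Lemma admissible_fire n i s : 1 <= i -> 2 <= s i -> admissible n s -> admissible n (fire i s).
Proof.
move=> i_gt0 s_i [[B [supp val_s]] fill_s]; split; last exact: fire_filled.
have le_iB : i <= B by case: (leqP i B) => // /supp; lia.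
exists B.+1; split=> [x lt_Bx | ].
  by rewrite fire_above ?supp //; lia.
by rewrite fire_value_high //= supp // mul0n addn0.
Qed.

Lemma admissible_reach n s u : reach split_or_C1 s u -> admissible n s -> admissible n u.
Proof.
elim=> // {}s t {}u m restr play _ IH adm_s; apply: IH.
by have [i [i_gt0 s_i ->]] := restricted_step restr play; apply: admissible_fire.
Qed.

Lemma terminal_le1 t x : terminal t -> 1 <= x -> t x <= 1.
Proof. by move=> term x_gt0; rewrite leqNgt; apply/negP; rewrite -legal_firing //; apply: term. Qed.

Lemma legal_comb i t : 0 < t i.+1 -> 0 < t i.+2 -> legal (Comb i.+2) t.
Proof.
move=> pos1 pos2; split=> // j /=; rewrite addn0.
case: (i.+1 =P j) => [<- | _]; first by rewrite (gtn_eqF (ltnSn _)).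
by case: (i.+2 =P j) => [<- | _].
Qed.

Lemma terminal_sparse t x : terminal t -> 0 < t x.+1 -> t x.+2 = 0.
Proof.
move=> term pos1; apply/eqP; rewrite -leqn0 leqNgt.
by apply/negP => /(legal_comb pos1)/term.
Qed.

Lemma sparse_terminal t : (forall x, 1 <= x -> t x <= 1) ->
  (forall x, 0 < t x.+1 -> t x.+2 = 0) -> terminal t.
Proof.
move=> le1 sparse [[|[|i]] | i] [/= valid cnt] //.
- by have := cnt 1; have := le1 1 isT; rewrite /=; lia.
- have := cnt i.+1; have := cnt i.+2; rewrite !eqxx /= => c2 c1.
  by have := sparse i; lia.
- have := cnt i; have := le1 i (ltnW valid); rewrite /= eqxx /=; lia.
Qed.

Lemma terminal_value_bound t j : terminal t -> value t j <= F j.+1 - 1.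
Proof.
move=> term; suff: value t j <= F j.+1 - 1 /\ value t j.+1 <= F j.+2 - 1 by case.
elim: j => [|j [IH1 IH2]].
  by have := terminal_le1 term (isT : 0 < 1); rewrite /= /F /=; lia.
split; first exact: IH2.
have := F_rec j.+1; have := F_monotone j.+2; have := terminal_le1 term (isT : 0 < j.+2).
rewrite value_succ; case: (posnP (t j.+1)) => [t1 | /(terminal_sparse term) ->]; last by lia.
have := F_gt0 j.+1; move: IH1; rewrite value_succ t1 mul0n addn0.
by case: (t j.+2) => [|[|]]; lia.
Qed.

Lemma filled_value_top s p : filled s -> 1 <= p -> 0 < s p -> F p.+1 - 1 <= value s p.
Proof.
case: p => [|[|q]] // fill_s _ pos; first by rewrite /= add0n muln1.
rewrite value_succ.
have := fill_s q.+1 q.+2 (ltnSn _) pos; have := F_rec q.+1.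
have : F q.+2 <= s q.+2 * F q.+2 by exact: leq_pmull.
by have := F_gt0 q.+1; lia.
Qed.

Lemma restricted_end_value n t : 1 <= n -> reach split_or_C1 (start n) t -> terminal t ->
  exists2 k, 2 <= k & n = F k - 1.
Proof.
move=> n_gt0 play term; have [[B [_ val_t]] fill_t] := admissible_reach play (admissible_start n).
rewrite -val_t in n_gt0 *; have [p [/andP[p_gt0 _] pos_p ->]] := value_top n_gt0.
exists p.+1 => //; apply/eqP; rewrite eqn_leq terminal_value_bound //.
exact: filled_value_top.
Qed.

Lemma plays_shift m s t w : plays m s t -> plays m (sum_state s w) (sum_state t w).
Proof.
move=> [[valid le_rem] def_t]; split.
  by split=> // j; apply: leq_trans (le_rem j) (leq_addr _ _).
by move=> j; rewrite /sum_state def_t; have := le_rem j; lia.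
Qed.

Lemma reach_trans (P : move -> Prop) s t u : reach P s t -> reach P t u -> reach P s u.
Proof.
move=> R; elim: R u => // s0 t0 u0 m Pm play _ IH u /IH.
exact: reach_step Pm play.
Qed.

Lemma reach_shift (P : move -> Prop) s u w :
  reach P s u -> reach P (sum_state s w) (sum_state u w).
Proof.
elim=> [s' | {}s t {}u m Pm play _ IH]; first exact: reach_refl.
exact: reach_step Pm (plays_shift w play) IH.
Qed.

Lemma reach_sum (P : move -> Prop) s1 u1 s2 u2 : reach P s1 u1 -> reach P s2 u2 ->
  reach P (sum_state s1 s2) (sum_state u1 u2).
Proof.
move=> R1 R2; apply: reach_trans (reach_shift s2 R1) _.
by rewrite sum_stateC [sum_state u1 _]sum_stateC; apply: reach_shift.
Qed.

Lemma reach_fire i s u : 1 <= i -> 2 <= s i ->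
  reach split_or_C1 (fire i s) u -> reach split_or_C1 s u.
Proof.
move=> i_gt0 s_i; apply: reach_step (firing_move_restricted i) _.
by rewrite plays_firing.
Qed.

Fixpoint alt (m : nat) : state :=
  match m with
  | 0 => fun _ => 0
  | 1 => single 1
  | m'.+2 => sum_state (alt m') (single m'.+2)
  end.

Lemma alt_spec m x : alt m x = ((0 < x <= m) && ~~ odd (m - x)).
Proof.
elim/ltn_ind: m x => -[|[|m]] IH x /=; first by case: x.
  by rewrite /single; case: x => [|[|x]].
rewrite /sum_state IH //; case: (leqP x m) => [le_xm | lt_mx].
  rewrite (single_neq (negbT (@gtn_eqF x m.+2 (leqW le_xm)))) !subSn ?(leqW le_xm) //=.
  by rewrite negbK (leqW (leqW le_xm)) andbT addn0.
rewrite andbF add0n; case: (ltngtP x m.+2) => [lt_x | lt_x | ->].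
- have -> : x = m.+1 by lia.
  by rewrite single_neq ?subSS ?subSnn ?andbF // (gtn_eqF (ltnSn _)).
- by rewrite single_neq ?(ltn_eqF lt_x) // andbF.
- by rewrite single_eq subnn.
Qed.

Lemma alt0 x : alt 0 x = 0.
Proof. by []. Qed.

Lemma alt1 x : alt 1 x = single 1 x.
Proof. by []. Qed.

Lemma alt_rec m x : alt m.+2 x = alt m x + single m.+2 x.
Proof. by []. Qed.

(* From now on alt m is unfolded only through alt_rec, so that pointwise
   identities between states stay linear in the atoms alt _ x and single _ x. *)
Arguments alt : simpl never.

Lemma alt_top m : 1 <= m -> alt m m = 1.
Proof. by move=> m_gt0; rewrite alt_spec subnn leqnn m_gt0. Qed.

Lemma alt_terminal m : terminal (alt m).
Proof.
apply: sparse_terminal => [x _ | x]; first by rewrite alt_spec leq_b1.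
rewrite !alt_spec lt0b => /andP[/andP[_ le_xm] even_x1]; apply/eqP; rewrite eqb0.
case: (leqP x.+2 m) => [le_x2m | ]; last by rewrite andbF.
by rewrite -(subnSK le_x2m) /= negbK in even_x1; rewrite even_x1 andbF.
Qed.

Ltac state_eq := apply: functional_extensionality => x;
  rewrite /fire /sum_state /= ?alt_rec ?alt0 ?alt1; lia.

Lemma alt_carry j : 1 <= j -> reach split_or_C1 (sum_state (alt j) (single j)) (alt j.+1).
Proof.
elim/ltn_ind: j => j IH j_gt0; apply: (reach_fire j_gt0).
  by rewrite /sum_state alt_top ?single_eq.
case: j j_gt0 IH => [|[|[|k]]] // _ IH.
- have -> : fire 1 (sum_state (alt 1) (single 1)) = alt 2 by state_eq.
  exact: reach_refl.
- have -> : fire 2 (sum_state (alt 2) (single 2)) = alt 3 by state_eq.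
  exact: reach_refl.
- have -> : fire k.+3 (sum_state (alt k.+3) (single k.+3)) =
    sum_state (sum_state (alt k.+1) (single k.+1)) (single k.+4) by state_eq.
  exact: reach_sum (IH k.+1 _ _) (reach_refl _ _).
Qed.

(* Merge: alt (p + 1) + alt p + F_1 reaches alt (p + 2), by carrying twice. *)
Lemma alt_merge p :
  reach split_or_C1 (sum_state (sum_state (alt p.+1) (alt p)) (single 1)) (alt p.+2).
Proof.
elim/ltn_ind: p => -[|[|q]] IH.
- have -> : sum_state (sum_state (alt 1) (alt 0)) (single 1) = sum_state (alt 1) (single 1)
    by state_eq.
  exact: alt_carry.
- apply: (@reach_fire 1) => //.
  have -> : fire 1 (sum_state (sum_state (alt 2) (alt 1)) (single 1)) =
    sum_state (alt 2) (single 2) by state_eq.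
  exact: alt_carry.
- have -> : sum_state (sum_state (alt q.+3) (alt q.+2)) (single 1) =
    sum_state (sum_state (sum_state (sum_state (alt q.+1) (alt q)) (single 1))
      (single q.+2)) (single q.+3) by state_eq.
  apply: reach_trans (reach_sum (reach_sum (IH q _) (reach_refl _ _)) (reach_refl _ _)) _ => //.
  apply: reach_trans (reach_sum (alt_carry _) (reach_refl _ _)) _ => //.
  exact: alt_carry.
Qed.

Lemma start_add a b : start (a + b) = sum_state (start a) (start b).
Proof. by apply: functional_extensionality => x; rewrite /start /sum_state; case: eqP. Qed.

Lemma start1 : start 1 = single 1.
Proof. by apply: functional_extensionality => x; rewrite /start /single eq_sym; case: eqP. Qed.

(* If: {F_1^n} with n = F_{p+2} - 1 reaches the Zeckendorf decomposition alt (p + 1),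
   splitting n = (F_{p+3} - 1) + (F_{p+2} - 1) + 1 along the recurrence. *)
Lemma start_reaches_alt p : reach split_or_C1 (start (F p.+2 - 1)) (alt p.+1).
Proof.
elim/ltn_ind: p => -[|[|q]] IH.
- by rewrite start1; apply: reach_refl.
- by rewrite (start_add 1 1) start1; apply: alt_carry.
- have -> : F q.+4 - 1 = (F q.+3 - 1) + (F q.+2 - 1) + 1.
    by have := F_rec q.+2; have := F_gt0 q.+3; have := F_gt0 q.+2; lia.
  rewrite !start_add start1; apply: reach_trans (alt_merge q.+1).
  exact: reach_sum (reach_sum (IH q.+1 _) (IH q _)) (reach_refl _ _).
Qed.

Theorem theorem1p3 (n : nat) : 1 <= n ->
  (exists t : state, reach split_or_C1 (start n) t /\ terminal t) <->
  (exists k : nat, 2 <= k /\ n = F k - 1).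
Proof.
move=> n_gt0; split=> [[t [play term]] | [[|[|p]] [// _ ->]]].
- by have [k k_ge2 ->] := restricted_end_value n_gt0 play term; exists k.
- by exists (alt p.+1); split; [apply: start_reaches_alt | apply: alt_terminal].
Qed.
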